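(* Let $d_{w,1}$ be a Lorentz sequence space (with $p=1$), let $(f_n)$ be the unit vector basis of $\ell_1$, and let $j\colon\ell_1\to d_{w,1}$ be the formal identity. If $T\in L(\ell_1,d_{w,1})$ is such that the set $\{Tf_n:n\in\mathbb N\}$ is almost lengthwise bounded, then for every $\varepsilon>0$ there exists $S\in L(\ell_1)$ such that $\|T-jS\|<\varepsilon$.
   Context: Let $w=(w_n)$ be a real sequence with $w_1=1$, $w_n\downarrow 0$ and $\sum_n w_n=\infty$. The Lorentz sequence space $d_{w,1}$ is the Banach space of all $x=(x_n)\in c_0$ with $\|x\|=\sum_{n}w_n x^*_n<\infty$, where $x^*=(x^*_n)$ is the non-increasing rearrangement of $(|x_n|)$. The formal identity $j\colon\ell_1\to d_{w,1}$ sends the $n$-th unit vector of $\ell_1$ to the $n$-th unit vector of $d_{w,1}$. For a vector $z=(z_i)$ and $N\in\mathbb N$, $z|_{[N,\infty)}$ is the vector with coordinates $z_i$ for $i\ge N$ and $0$ otherwise. A set $A\subseteq d_{w,1}$ is almost lengthwise bounded if for every $\varepsilon>0$ there is $N$ with $\|x^*|_{[N,\infty)}\|<\varepsilon$ for all $x\in A$. *)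

From Stdlib Require Import Reals Lra Lia List.
From Coquelicot Require Import Coquelicot.
Open Scope R_scope.

(* Sequences are functions nat -> R, indexed from 0 (index n corresponds to
   the paper's index n+1). *)

Definition few_above (x : nat -> R) (t : R) (n : nat) : Prop :=
  forall l : list nat, NoDup l -> (forall i, In i l -> t < Rabs (x i)) ->
    (length l <= n)%nat.

(* Non-increasing rearrangement of (|x_n|) via the distribution function:
   x*_n = inf { t >= 0 : #{ i : |x_i| > t } <= n }   (0-indexed). *)
Definition dstar (x : nat -> R) (n : nat) : R :=
  real (Glb_Rbar (fun t => 0 <= t /\ few_above x t n)).

Definition in_l1 (x : nat -> R) : Prop := ex_series (fun n => Rabs (x n)).
Definition l1norm (x : nat -> R) : R := Series (fun n => Rabs (x n)).

Definition lnorm (w : nat -> R) (x : nat -> R) : R :=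
  Series (fun n => w n * dstar x n).
Definition in_dw (w : nat -> R) (x : nat -> R) : Prop :=
  is_lim_seq x 0 /\ ex_series (fun n => w n * dstar x n).

Definition lorentz_weight (w : nat -> R) : Prop :=
  w 0%nat = 1 /\ (forall n, 0 < w n) /\ (forall n, w (S n) <= w n) /\
  is_lim_seq w 0 /\ ~ ex_series w.

Definition unitv (n : nat) : nat -> R := fun i => if Nat.eqb i n then 1 else 0.

Definition trunc (N : nat) (z : nat -> R) : nat -> R :=
  fun i => if Nat.leb N i then z i else 0.

Definition linear_on (P : (nat -> R) -> Prop) (T : (nat -> R) -> (nat -> R)) : Prop :=
  (forall x y, P x -> P y -> T (fun i => x i + y i) = (fun i => T x i + T y i)) /\
  (forall (a : R) x, P x -> T (fun i => a * x i) = (fun i => a * T x i)).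

Definition bdd_l1_dw (w : nat -> R) (T : (nat -> R) -> (nat -> R)) : Prop :=
  linear_on in_l1 T /\ (forall x, in_l1 x -> in_dw w (T x)) /\
  exists C, forall x, in_l1 x -> lnorm w (T x) <= C * l1norm x.

Definition bdd_l1_l1 (S : (nat -> R) -> (nat -> R)) : Prop :=
  linear_on in_l1 S /\ (forall x, in_l1 x -> in_l1 (S x)) /\
  exists C, forall x, in_l1 x -> l1norm (S x) <= C * l1norm x.

Definition almost_lengthwise_bounded (w : nat -> R) (A : (nat -> R) -> Prop) : Prop :=
  forall eps, 0 < eps -> exists N : nat,
    forall x, A x -> lnorm w (trunc N (dstar x)) < eps.

From Stdlib Require Import Reals Lra Lia List Classical ClassicalEpsilon FunctionalExtensionality.
From Coquelicot Require Import Coquelicot.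
Open Scope R_scope.

(* Choose N with ||(T f_n)^*|_[N,oo)|| < eps/3 for all n, and for each n a set L_n of N
   coordinates on which y_n = T f_n nearly attains y_n^*_0 + ... + y_n^*_(N-1).  Let S send f_n to
   the restriction of y_n to L_n; these have l1 norm at most ||T|| / w_N, so S is bounded on l1.  What
   remains of y_n off L_n is dominated, value by value in decreasing order, by the tail
   y_n^*_N, y_n^*_(N+1), ... up to the slack eps/3, so by Abel summation all its weighted sums
   over distinct coordinates are at most 2 eps/3.  The coordinates of (T - jS) x are the
   l1-combinations sum_n x_n (y_n - S f_n), whence ||T - jS|| <= 2 eps/3. *)

(* [psum a K] sums the first [K] terms, whereas Coquelicot's [sum_n a K] sums [K+1]. *)
Fixpoint psum (a : nat -> R) (K : nat) : R :=
  match K with O => 0 | S K' => psum a K' + a K' end.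

Lemma sum_n_psum a K : sum_n a K = psum a (S K).
Proof.
  induction K as [|K IH]; simpl.
  - rewrite sum_O; lra.
  - rewrite sum_Sn, IH; reflexivity.
Qed.

Lemma is_series_psum a l : is_series a l <-> is_lim_seq (psum a) l.
Proof.
  rewrite is_lim_seq_incr_1; split; intros H.
  - apply (is_lim_seq_ext (sum_n a)); [intro; apply sum_n_psum | exact H].
  - assert (H' : is_lim_seq (sum_n a) l)
      by (apply (is_lim_seq_ext (fun K => psum a (S K))); [intro; symmetry; apply sum_n_psum | exact H]).
    exact H'.
Qed.

Lemma psum_ext a b K : (forall k, (k < K)%nat -> a k = b k) -> psum a K = psum b K.
Proof.
  induction K as [|K IH]; intros H; simpl; [reflexivity|].
  rewrite IH, H; auto; intros; apply H; lia.
Qed.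

Lemma psum_le a b K : (forall k, (k < K)%nat -> a k <= b k) -> psum a K <= psum b K.
Proof.
  induction K as [|K IH]; intros H; simpl; [lra|].
  assert (a K <= b K) by (apply H; lia).
  assert (psum a K <= psum b K) by (apply IH; intros; apply H; lia).
  lra.
Qed.

Lemma psum_nonneg a K : (forall k, 0 <= a k) -> 0 <= psum a K.
Proof. intros H; induction K; simpl; [lra|]; specialize (H K); lra. Qed.

Lemma psum_le_psum_len a K L : (forall k, 0 <= a k) -> (K <= L)%nat -> psum a K <= psum a L.
Proof. intros H HKL; induction HKL; simpl; [lra|]; specialize (H m); lra. Qed.

Lemma psum_plus a b K : psum (fun k => a k + b k) K = psum a K + psum b K.
Proof. induction K; simpl; [ring|]; rewrite IHK; ring. Qed.

Lemma psum_scal c a K : psum (fun k => c * a k) K = c * psum a K.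
Proof. induction K; simpl; [ring|]; rewrite IHK; ring. Qed.

Lemma psum_const c K : psum (fun _ => c) K = INR K * c.
Proof. induction K; simpl psum; [simpl; ring|]; rewrite IHK, S_INR; ring. Qed.

Lemma psum_add_len a N K : psum a (N + K) = psum a N + psum (fun k => a (N + k)%nat) K.
Proof.
  induction K as [|K IH]; simpl; [rewrite Nat.add_0_r; ring|].
  rewrite Nat.add_succ_r; simpl; rewrite IH; ring.
Qed.

Lemma psum_succ_l a K : psum a (S K) = a 0%nat + psum (fun k => a (S k)) K.
Proof. induction K; simpl in *; [ring|]; rewrite IHK; ring. Qed.

Lemma psum_telescope a K : psum (fun k => a k - a (S k)) K = a 0%nat - a K.
Proof. induction K; simpl; [ring|]; rewrite IHK; ring. Qed.

Lemma is_series_finite_support a M :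
  (forall i, (M <= i)%nat -> a i = 0) -> is_series a (psum a M).
Proof.
  intros H; apply is_series_psum.
  apply is_lim_seq_ext_loc with (fun _ => psum a M); [|apply is_lim_seq_const].
  exists M; intros n Hn; replace n with (M + (n - M))%nat by lia.
  rewrite psum_add_len, (psum_ext (fun k => a (M + k)%nat) (fun _ => 0)), psum_const; [ring|].
  intros k _; apply H; lia.
Qed.

Lemma Series_ge_psum a K : ex_series a -> (forall n, 0 <= a n) -> psum a K <= Series a.
Proof.
  intros Ha Hp; pose proof (Series_correct _ Ha) as Hs; rewrite is_series_psum in Hs.
  assert (H := is_lim_seq_le_loc (fun _ => psum a K) (psum a) (psum a K) (Series a)).
  simpl in H; apply H; auto; [|apply is_lim_seq_const].
  exists K; intros n Hn; apply psum_le_psum_len; auto.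
Qed.

Lemma Lim_sum_n_le a B : (forall K, psum a K <= B) -> Rbar_le (Lim_seq (sum_n a)) B.
Proof.
  intros Hb; rewrite <- Lim_seq_const; apply Lim_seq_le_loc.
  exists O; intros n _; rewrite sum_n_psum; apply Hb.
Qed.

Lemma Series_le_of_psum_le a B : 0 <= B -> (forall K, psum a K <= B) -> Series a <= B.
Proof.
  intros HB Hb; pose proof (Lim_sum_n_le a B Hb) as H.
  unfold Series; destruct (Lim_seq (sum_n a)); simpl in *; lra.
Qed.

Lemma Series_nonneg a : (forall n, 0 <= a n) -> 0 <= Series a.
Proof.
  intros Hp.
  assert (H : Rbar_le 0 (Lim_seq (sum_n a))).
  { rewrite <- (Lim_seq_const 0); apply Lim_seq_le_loc.
    exists O; intros n _; rewrite sum_n_psum; apply psum_nonneg; auto. }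
  unfold Series; destruct (Lim_seq (sum_n a)); simpl in *; lra.
Qed.

Lemma ex_series_of_psum_le a B : (forall n, 0 <= a n) -> (forall K, psum a K <= B) -> ex_series a.
Proof.
  intros Hp Hb.
  assert (Hi : forall n, sum_n a n <= sum_n a (S n))
    by (intro n; rewrite !sum_n_psum; apply psum_le_psum_len; auto).
  pose proof (Lim_seq_correct _ (ex_lim_seq_incr _ Hi)) as Hl.
  assert (H0 : Rbar_le (sum_n a 0) (Lim_seq (sum_n a))).
  { rewrite <- (Lim_seq_const (sum_n a 0)); apply Lim_seq_le_loc.
    exists O; intros n _; rewrite !sum_n_psum; apply psum_le_psum_len; auto; lia. }
  pose proof (Lim_sum_n_le a B Hb) as HB.
  destruct (Lim_seq (sum_n a)) eqn:E; simpl in *; try tauto.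
  exists r; exact Hl.
Qed.

Lemma ex_series_R_le (a b : nat -> R) : (forall n, Rabs (a n) <= b n) -> ex_series b -> ex_series a.
Proof. intros H Hb; apply (@ex_series_le R_AbsRing R_CompleteNormedModule) with b; auto. Qed.

Lemma ex_series_R_ext (a b : nat -> R) : (forall n, a n = b n) -> ex_series a -> ex_series b.
Proof. exact (@ex_series_ext R_AbsRing R_NormedModule a b). Qed.

Lemma is_series_R_ext (a b : nat -> R) l : (forall n, a n = b n) -> is_series a l -> is_series b l.
Proof. exact (@is_series_ext R_AbsRing R_NormedModule a b l). Qed.

Lemma ex_series_psum (f : nat -> nat -> R) I :
  (forall i, ex_series (f i)) -> ex_series (fun n => psum (fun i => f i n) I).
Proof.
  intros H; induction I; simpl.
  - exists 0; apply (is_series_finite_support (fun _ => 0) 0); auto.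
  - exact (ex_series_plus _ _ IHI (H I)).
Qed.

Lemma Series_psum (f : nat -> nat -> R) I : (forall i, ex_series (f i)) ->
  psum (fun i => Series (f i)) I = Series (fun n => psum (fun i => f i n) I).
Proof.
  intros H; induction I; simpl.
  - symmetry; apply is_series_unique, (is_series_finite_support (fun _ => 0) 0); auto.
  - rewrite Series_plus, IHI; auto; apply ex_series_psum; auto.
Qed.

Lemma le_of_le_plus_eps a b M : 0 <= M -> (forall d, 0 < d -> a <= b + d * M) -> a <= b.
Proof.
  intros HM H; destruct (Rle_or_lt a b) as [h|h]; auto.
  set (d := (a - b) / (2 * (M + 1))).
  assert (Hd : 0 < d) by (apply Rdiv_lt_0_compat; lra).
  assert (d * (2 * (M + 1)) = a - b) by (unfold d; field; lra).
  specialize (H d Hd); nra.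
Qed.

(* Abel summation. *)
Lemma psum_weighted_le (w a b : nat -> R) d K :
  (forall k, 0 <= w k) -> (forall k, w (S k) <= w k) -> 0 <= d ->
  (forall j, (j <= K)%nat -> psum a j <= psum b j + d) ->
  psum (fun k => w k * a k) K <= psum (fun k => w k * b k) K + w 0%nat * d.
Proof.
  intros Hw0 Hw Hd Hab.
  set (c := fun k => b k - a k).
  assert (Hc : forall j, psum c j = psum b j - psum a j).
  { intro j; unfold c; rewrite (psum_ext _ (fun k => b k + (-1) * a k)) by (intros; ring).
    rewrite psum_plus, psum_scal; ring. }
  assert (Hsum : psum (fun k => w k * c k) K =
     w K * psum c K + psum (fun k => (w k - w (S k)) * psum c (S k)) K).
  { clear Hab; induction K as [|K IH]; simpl in *; [ring|]; rewrite IH; ring. }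
  assert (Hwc : psum (fun k => w k * c k) K
      = psum (fun k => w k * b k) K - psum (fun k => w k * a k) K).
  { unfold c; rewrite (psum_ext _ (fun k => w k * b k + (-1) * (w k * a k))) by (intros; ring).
    rewrite psum_plus, psum_scal; ring. }
  assert (H1 : psum (fun k => (w k - w (S k)) * (- d)) K
               <= psum (fun k => (w k - w (S k)) * psum c (S k)) K).
  { apply psum_le; intros k Hk; apply Rmult_le_compat_l; [specialize (Hw k); lra|].
    rewrite Hc; specialize (Hab (S k) ltac:(lia)); lra. }
  rewrite (psum_ext _ (fun k => (- d) * (w k - w (S k)))), psum_scal, psum_telescope in H1
    by (intros; ring).
  assert (H2 : w K * (- d) <= w K * psum c K)
    by (apply Rmult_le_compat_l; auto; rewrite Hc; specialize (Hab K (le_n K)); lra).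
  lra.
Qed.

Definition lsum (f : nat -> R) (l : list nat) : R := fold_right (fun i s => f i + s) 0 l.

Lemma lsum_app f l1 l2 : lsum f (l1 ++ l2) = lsum f l1 + lsum f l2.
Proof. induction l1; simpl; [ring|]; rewrite IHl1; ring. Qed.

Lemma lsum_ext f g l : (forall i, f i = g i) -> lsum f l = lsum g l.
Proof. intros H; induction l; simpl; auto; rewrite IHl, H; auto. Qed.

Lemma lsum_firstn f l j : (j <= length l)%nat ->
  lsum f (firstn j l) = psum (fun k => f (nth k l 0%nat)) j.
Proof.
  revert j; induction l as [|a l IH]; intros j Hj; simpl in Hj.
  - replace j with 0%nat by lia; reflexivity.
  - destruct j as [|j]; [reflexivity|].
    rewrite firstn_cons, psum_succ_l; simpl lsum; rewrite IH by lia; reflexivity.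
Qed.

Lemma lsum_nth f l : lsum f l = psum (fun k => f (nth k l 0%nat)) (length l).
Proof. rewrite <- lsum_firstn, firstn_all; auto. Qed.

Definition memb (L : list nat) (i : nat) : bool := if in_dec Nat.eq_dec i L then true else false.

Lemma memb_In L i : memb L i = true <-> In i L.
Proof. unfold memb; destruct (in_dec Nat.eq_dec i L); split; auto; discriminate. Qed.

Lemma psum_filter (p : nat -> bool) f I :
  psum (fun i => if p i then f i else 0) I = lsum f (filter p (seq 0 I)).
Proof.
  induction I; [reflexivity|].
  rewrite seq_S, filter_app, lsum_app; simpl; rewrite IHI; destruct (p I); simpl; ring.
Qed.

Lemma lsum_filter_neg (p : nat -> bool) f l :
  lsum (fun i => if p i then 0 else f i) l = lsum f (filter (fun i => negb (p i)) l).
Proof. induction l; simpl; [reflexivity|]; rewrite IHl; destruct (p a); simpl; ring. Qed.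

Lemma exists_min_In (f : nat -> R) l : l <> nil -> exists m, In m l /\ forall i, In i l -> f m <= f i.
Proof.
  induction l as [|a l IH]; intros Hne; [congruence|].
  destruct l as [|b l'].
  - exists a; split; [left; auto|]; intros i [<-|[]]; lra.
  - destruct IH as [m [Hm Hmin]]; [discriminate|].
    destruct (Rle_or_lt (f a) (f m)).
    + exists a; split; [left; auto|]; intros i [<-|Hi]; [lra|]; specialize (Hmin i Hi); lra.
    + exists m; split; [right; auto|]; intros i [<-|Hi]; [lra|auto].
Qed.

Lemma few_above_mono x t t' n : t <= t' -> few_above x t n -> few_above x t' n.
Proof. intros Ht H l Hl Hi; apply H; auto; intros i Hi'; specialize (Hi i Hi'); lra. Qed.

Lemma few_above_mono_n x t n n' : (n <= n')%nat -> few_above x t n -> few_above x t n'.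
Proof. intros Hn H l Hl Hi; specialize (H l Hl Hi); lia. Qed.

Lemma dstar_nonneg x n : 0 <= dstar x n.
Proof.
  unfold dstar; destruct (Glb_Rbar_correct (fun t => 0 <= t /\ few_above x t n)) as [_ H].
  assert (H0 : Rbar_le 0 (Glb_Rbar (fun t => 0 <= t /\ few_above x t n)))
    by (apply H; intros t [Ht _]; exact Ht).
  destruct (Glb_Rbar _); simpl in *; lra.
Qed.

Lemma dstar_le_of_few_above x t n : few_above x t n -> 0 <= t -> dstar x n <= t.
Proof.
  intros Hf Ht; unfold dstar.
  destruct (Glb_Rbar_correct (fun t => 0 <= t /\ few_above x t n)) as [H _].
  specialize (H t (conj Ht Hf)); destruct (Glb_Rbar _); simpl in *; lra.
Qed.

Lemma not_few_above_of_lt_dstar x t n : t < dstar x n -> ~ few_above x t n.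
Proof.
  intros Ht Hf; destruct (Rlt_or_le t 0) as [Hn|Hn].
  - specialize (Hf (seq 0 (S n)) (seq_NoDup _ _)); rewrite length_seq in Hf.
    enough (S n <= n)%nat by lia.
    apply Hf; intros i _; pose proof (Rabs_pos (x i)); lra.
  - pose proof (dstar_le_of_few_above x t n Hf Hn); lra.
Qed.

Definition bounded_seq (x : nat -> R) : Prop := exists B, forall i, Rabs (x i) <= B.

(* Boundedness makes the infimum defining [dstar] range over a nonempty set;
   otherwise [Glb_Rbar] is [+oo] and [dstar] degenerates to [0]. *)
Lemma le_dstar_of_not_few_above x t n : bounded_seq x -> ~ few_above x t n -> t <= dstar x n.
Proof.
  intros [B HB] Hnf.
  set (E := fun t => 0 <= t /\ few_above x t n).
  assert (HE : E (Rmax 0 B)).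
  { split; [apply Rmax_l|]; intros [|i l] _ Hi; simpl; [lia|].
    specialize (Hi i (or_introl eq_refl)); specialize (HB i); pose proof (Rmax_r 0 B); lra. }
  unfold dstar; fold E; destruct (Glb_Rbar_correct E) as [Hlb Hglb].
  pose proof (Hlb _ HE) as H1.
  assert (H0 : Rbar_le 0 (Glb_Rbar E)) by (apply Hglb; intros s [Hs _]; exact Hs).
  destruct (Glb_Rbar E) as [g| |]; simpl in *; try tauto.
  destruct (Rle_or_lt t g) as [Hle|Hlt]; auto; exfalso.
  destruct (classic (exists e, E e /\ e < t)) as [[e [[_ He] Het]]|Hno].
  - apply Hnf; apply few_above_mono with e; auto; lra.
  - assert (Hg : Rbar_le t g).
    { apply Hglb; intros e He; simpl.
      destruct (Rle_or_lt t e); auto; exfalso; apply Hno; eauto. }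
    simpl in Hg; lra.
Qed.

Lemma le_dstar_of_list x l n t : bounded_seq x -> NoDup l -> (n < length l)%nat ->
  (forall i, In i l -> t <= Rabs (x i)) -> t <= dstar x n.
Proof.
  intros Hb Hl Hn Ht; destruct (Rle_or_lt t (dstar x n)) as [H|H]; auto.
  assert (Hs : (t + dstar x n) / 2 <= dstar x n).
  { apply le_dstar_of_not_few_above; auto; intros Hf.
    enough (length l <= n)%nat by lia.
    apply Hf; auto; intros i Hi; specialize (Ht i Hi); lra. }
  lra.
Qed.

Lemma Rabs_le_dstar0 x i : bounded_seq x -> Rabs (x i) <= dstar x 0.
Proof.
  intros Hb; apply le_dstar_of_list with (i :: nil); auto.
  - repeat constructor; intros [].
  - intros j [<-|[]]; lra.
Qed.

Lemma dstar_S_le x n : bounded_seq x -> dstar x (S n) <= dstar x n.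
Proof.
  intros Hb; destruct (Rle_or_lt (dstar x (S n)) (dstar x n)) as [H|H]; auto.
  set (t := (dstar x n + dstar x (S n)) / 2).
  assert (Hf : few_above x t n)
    by (apply NNPP; intros Hn; pose proof (le_dstar_of_not_few_above x t n Hb Hn); unfold t in *; lra).
  apply few_above_mono_n with (n' := S n) in Hf; [|lia].
  pose proof (dstar_nonneg x n).
  pose proof (dstar_le_of_few_above x t (S n) Hf ltac:(unfold t; lra)); unfold t in *; lra.
Qed.

Lemma dstar_antitone x m n : bounded_seq x -> (m <= n)%nat -> dstar x n <= dstar x m.
Proof. intros Hb H; induction H; [lra|]; pose proof (dstar_S_le x m0 Hb); lra. Qed.

Lemma lsum_abs_le_psum_dstar x l : bounded_seq x -> NoDup l ->
  lsum (fun i => Rabs (x i)) l <= psum (dstar x) (length l).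
Proof.
  intros Hb; remember (length l) as n eqn:Hlen; revert l Hlen.
  induction n as [|n IH]; intros l Hlen Hnd.
  - destruct l; simpl in *; [lra|lia].
  - destruct (exists_min_In (fun i => Rabs (x i)) l) as [m [Hm Hmin]];
      [intros ->; simpl in *; lia|].
    destruct (in_split _ _ Hm) as [l1 [l2 ->]].
    assert (Hnd' := NoDup_remove_1 _ _ _ Hnd).
    assert (Hlen' : n = length (l1 ++ l2)) by (rewrite length_app in *; simpl in Hlen; lia).
    specialize (IH _ Hlen' Hnd'); rewrite lsum_app in *; simpl.
    assert (Rabs (x m) <= dstar x n) by (apply le_dstar_of_list with (l1 ++ m :: l2); auto; lia).
    lra.
Qed.

Lemma dstar_approx_list x d K : 0 < d -> exists l, NoDup l /\ length l = K /\
  forall k, (k < K)%nat -> dstar x k - d < Rabs (x (nth k l 0%nat)).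
Proof.
  intros Hd; induction K as [|K [l [Hnd [Hlen Hl]]]].
  - exists nil; repeat split; [constructor|intros; lia].
  - assert (Hnf := not_few_above_of_lt_dstar x (dstar x K - d) K ltac:(lra)).
    assert (HA : exists A, NoDup A /\ (forall i, In i A -> dstar x K - d < Rabs (x i))
                          /\ (K < length A)%nat).
    { apply NNPP; intros Hno; apply Hnf; intros A HA Hi.
      destruct (Compare_dec.le_lt_dec (length A) K); auto; exfalso; apply Hno; eauto. }
    destruct HA as [A [HAnd [HAi HAlen]]].
    assert (Ha : exists a, In a A /\ ~ In a l).
    { apply NNPP; intros Hno.
      assert (incl A l) by (intros a Ha; apply NNPP; intro; apply Hno; eauto).
      pose proof (NoDup_incl_length HAnd H); lia. }
    destruct Ha as [a [HaA Hal]].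
    exists (l ++ a :: nil); split; [|split].
    + apply NoDup_app; auto; [repeat constructor; intros []|].
      intros i Hi [<-|[]]; contradiction.
    + rewrite length_app; simpl; lia.
    + intros k Hk; destruct (Nat.eq_dec k K) as [->|Hne].
      * rewrite <- Hlen at 2; rewrite nth_middle; auto.
      * rewrite app_nth1 by lia; apply Hl; lia.
Qed.

Lemma bounded_seq_of_cvg0 x : is_lim_seq x 0 -> bounded_seq x.
Proof.
  intros Hx; apply is_lim_seq_spec in Hx; destruct (Hx (mkposreal 1 Rlt_0_1)) as [M HM].
  exists (1 + psum (fun i => Rabs (x i)) M); intro i.
  pose proof (psum_nonneg (fun i => Rabs (x i)) M (fun i => Rabs_pos _)).
  destruct (Compare_dec.le_lt_dec M i) as [Hle|Hlt].
  - specialize (HM i Hle); simpl in HM; rewrite Rminus_0_r in HM; lra.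
  - assert (Rabs (x i) <= psum (fun i => Rabs (x i)) M); [|lra].
    eapply Rle_trans; [|apply psum_le_psum_len with (K := S i); [intros; apply Rabs_pos|lia]].
    simpl; pose proof (psum_nonneg (fun i => Rabs (x i)) i (fun i => Rabs_pos _)); lra.
Qed.

Lemma bounded_seq_trunc_dstar x N : bounded_seq x -> bounded_seq (trunc N (dstar x)).
Proof.
  intros Hb; exists (dstar x 0); intros i; unfold trunc; destruct (Nat.leb N i).
  - rewrite Rabs_pos_eq by apply dstar_nonneg; apply dstar_antitone; auto; lia.
  - rewrite Rabs_R0; apply dstar_nonneg.
Qed.

Lemma dstar_trunc_dstar x N k : bounded_seq x -> dstar (trunc N (dstar x)) k = dstar x (N + k).
Proof.
  intros Hb; set (G := trunc N (dstar x)); apply Rle_antisym.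
  - apply dstar_le_of_few_above; [|apply dstar_nonneg].
    intros l Hl Hi; rewrite <- (length_seq k N); apply NoDup_incl_length; auto.
    intros i Hil; specialize (Hi i Hil); unfold G, trunc in Hi; apply in_seq.
    destruct (Nat.leb N i) eqn:E.
    + apply Nat.leb_le in E; split; auto.
      destruct (Compare_dec.le_lt_dec (N + k) i) as [Hle|Hlt]; [|lia].
      rewrite Rabs_pos_eq in Hi by apply dstar_nonneg.
      pose proof (dstar_antitone x _ _ Hb Hle); lra.
    + rewrite Rabs_R0 in Hi; pose proof (dstar_nonneg x (N + k)); lra.
  - apply le_dstar_of_list with (seq N (S k)).
    + apply bounded_seq_trunc_dstar; auto.
    + apply seq_NoDup.
    + rewrite length_seq; lia.
    + intros i Hi; apply in_seq in Hi; unfold G, trunc.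
      replace (Nat.leb N i) with true by (symmetry; apply Nat.leb_le; lia).
      rewrite Rabs_pos_eq by apply dstar_nonneg; apply dstar_antitone; auto; lia.
Qed.

Lemma exists_top_list x N d : 0 < d -> exists L, NoDup L /\ length L = N /\
  psum (dstar x) N - d <= lsum (fun i => Rabs (x i)) L.
Proof.
  intros Hd; pose proof (pos_INR N) as HN.
  set (d' := d / (INR N + 1)).
  assert (Hd' : 0 < d') by (apply Rdiv_lt_0_compat; lra).
  assert (HNd : INR N * d' <= d)
    by (unfold d'; apply Rmult_le_reg_r with (INR N + 1); [lra|]; field_simplify; nra).
  destruct (dstar_approx_list x d' N Hd') as [L [Hnd [Hlen HL]]].
  exists L; repeat split; auto.
  rewrite lsum_nth, Hlen.
  assert (H : psum (fun k => dstar x k + (-1) * d') N <= psum (fun k => Rabs (x (nth k L 0%nat))) N)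
    by (apply psum_le; intros k Hk; specialize (HL k Hk); lra).
  rewrite psum_plus, psum_const in H; lra.
Qed.

Definition keep_on (L : list nat) (y : nat -> R) : nat -> R :=
  fun i => if memb L i then y i else 0.

Definition drop_on (L : list nat) (y : nat -> R) : nat -> R :=
  fun i => if memb L i then 0 else y i.

Lemma psum_keep_on_le y L I : bounded_seq y ->
  psum (fun i => Rabs (keep_on L y i)) I <= psum (dstar y) (length L).
Proof.
  intros Hb.
  rewrite (psum_ext _ (fun i => if memb L i then Rabs (y i) else 0))
    by (intros i _; unfold keep_on; destruct (memb L i); auto; apply Rabs_R0).
  rewrite psum_filter.
  assert (Hnd : NoDup (filter (memb L) (seq 0 I))) by apply NoDup_filter, seq_NoDup.
  eapply Rle_trans; [apply lsum_abs_le_psum_dstar; auto|].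
  apply psum_le_psum_len; [intros; apply dstar_nonneg|].
  apply NoDup_incl_length; auto.
  intros i Hi; apply filter_In in Hi; apply memb_In, Hi.
Qed.

(* The first [j] coordinates of [l] outside [L], together with [L], are at most [j + N]
   distinct coordinates. *)
Lemma psum_drop_on_le_tail y N L d l j : bounded_seq y -> length L = N ->
  psum (dstar y) N - d <= lsum (fun i => Rabs (y i)) L -> NoDup L -> NoDup l ->
  (j <= length l)%nat ->
  psum (fun k => Rabs (drop_on L y (nth k l 0%nat))) j <= psum (fun k => dstar y (N + k)) j + d.
Proof.
  intros Hb HLlen HLsum HLnd Hl Hj.
  rewrite <- (lsum_firstn (fun i => Rabs (drop_on L y i))) by auto.
  rewrite (lsum_ext _ (fun i => if memb L i then 0 else Rabs (y i)))
    by (intro i; unfold drop_on; destruct (memb L i); auto; apply Rabs_R0).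
  rewrite lsum_filter_neg.
  set (F := filter (fun i => negb (memb L i)) (firstn j l)).
  assert (HFL : NoDup (F ++ L)).
  { apply NoDup_app; auto.
    - apply NoDup_filter; rewrite <- (firstn_skipn j l) in Hl; eapply NoDup_app_remove_r; eauto.
    - intros i Hi HiL; apply filter_In in Hi; apply memb_In in HiL.
      rewrite HiL in Hi; destruct Hi; discriminate. }
  pose proof (lsum_abs_le_psum_dstar y _ Hb HFL) as HP; rewrite lsum_app, length_app in HP.
  assert (HlenF : (length F <= j)%nat)
    by (eapply Nat.le_trans; [apply filter_length_le|rewrite length_firstn; lia]).
  assert (psum (dstar y) (length F + length L) <= psum (dstar y) (N + j))
    by (apply psum_le_psum_len; [intros; apply dstar_nonneg|lia]).
  rewrite (psum_add_len _ N j) in H; lra.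
Qed.

Section LorentzNorm.

Variable w : nat -> R.
Hypothesis w_nonneg : forall k, 0 <= w k.
Hypothesis w_antitone : forall k, w (S k) <= w k.

Lemma weight_antitone m n : (m <= n)%nat -> w n <= w m.
Proof. intros H; induction H; [lra|]; specialize (w_antitone m0); lra. Qed.

Lemma psum_weighted_dstar_le_lnorm v K : in_dw w v ->
  psum (fun k => w k * dstar v k) K <= lnorm w v.
Proof.
  intros [_ Hs]; apply Series_ge_psum; auto.
  intros n; apply Rmult_le_pos; auto; apply dstar_nonneg.
Qed.

Lemma Rabs_le_lnorm v i : in_dw w v -> w 0%nat * Rabs (v i) <= lnorm w v.
Proof.
  intros Hv; pose proof (psum_weighted_dstar_le_lnorm v 1 Hv) as H; simpl in H.
  pose proof (Rabs_le_dstar0 v i (bounded_seq_of_cvg0 _ (proj1 Hv))).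
  pose proof (w_nonneg 0); nra.
Qed.

Lemma psum_dstar_le_lnorm v N : in_dw w v -> w N * psum (dstar v) N <= lnorm w v.
Proof.
  intros Hv; rewrite <- psum_scal; eapply Rle_trans; [|apply psum_weighted_dstar_le_lnorm, Hv].
  apply psum_le; intros k Hk; apply Rmult_le_compat_r; [apply dstar_nonneg|].
  apply weight_antitone; lia.
Qed.

Lemma lnorm_le_of_lists V c : 0 <= c ->
  (forall l, NoDup l -> psum (fun k => w k * Rabs (V (nth k l 0%nat))) (length l) <= c) ->
  lnorm w V <= c.
Proof.
  intros Hc HV; apply Series_le_of_psum_le; auto; intros K.
  apply le_of_le_plus_eps with (psum w K); [apply psum_nonneg; auto|]; intros d Hd.
  destruct (dstar_approx_list V d K Hd) as [l [Hnd [Hlen Hl]]].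
  specialize (HV l Hnd); rewrite Hlen in HV.
  enough (psum (fun k => w k * dstar V k) K
          <= psum (fun k => w k * Rabs (V (nth k l 0%nat)) + d * w k) K)
    by (rewrite psum_plus, psum_scal in H; lra).
  apply psum_le; intros k Hk; specialize (Hl k Hk); specialize (w_nonneg k); nra.
Qed.

Lemma psum_weighted_tail_le_lnorm_trunc y N K : in_dw w y ->
  psum (fun k => w k * dstar y (N + k)) K <= lnorm w (trunc N (dstar y)).
Proof.
  intros Hy; assert (Hb := bounded_seq_of_cvg0 _ (proj1 Hy)).
  unfold lnorm; rewrite (psum_ext _ (fun k => w k * dstar (trunc N (dstar y)) k))
    by (intros; rewrite dstar_trunc_dstar; auto).
  apply Series_ge_psum; [|intros; apply Rmult_le_pos; auto; apply dstar_nonneg].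
  apply ex_series_R_le with (fun k => w k * dstar y k); [|apply Hy].
  intro k; rewrite Rabs_pos_eq by (apply Rmult_le_pos; auto; apply dstar_nonneg).
  apply Rmult_le_compat_l; auto.
  rewrite dstar_trunc_dstar by auto; apply dstar_antitone; auto; lia.
Qed.

Lemma psum_weighted_drop_on_le y N L d l : in_dw w y -> length L = N -> 0 <= d ->
  psum (dstar y) N - d <= lsum (fun i => Rabs (y i)) L -> NoDup L -> NoDup l ->
  psum (fun k => w k * Rabs (drop_on L y (nth k l 0%nat))) (length l)
    <= lnorm w (trunc N (dstar y)) + w 0%nat * d.
Proof.
  intros Hy HLlen Hd HLsum HLnd Hl.
  eapply Rle_trans; [apply (psum_weighted_le w _ (fun k => dstar y (N + k)) d); auto|].
  - intros j Hj; apply (psum_drop_on_le_tail y N L d l j); auto; apply bounded_seq_of_cvg0, Hy.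
  - pose proof (psum_weighted_tail_le_lnorm_trunc y N (length l) Hy); lra.
Qed.

End LorentzNorm.

Lemma in_l1_of_finite_support x M : (forall i, (M <= i)%nat -> x i = 0) -> in_l1 x.
Proof.
  intros H; exists (psum (fun i => Rabs (x i)) M); apply is_series_finite_support.
  intros i Hi; rewrite H; auto; apply Rabs_R0.
Qed.

Lemma l1norm_nonneg x : 0 <= l1norm x.
Proof. apply Series_nonneg; intros; apply Rabs_pos. Qed.

Lemma unitv_neq n i : i <> n -> unitv n i = 0.
Proof. intros H; unfold unitv; rewrite (proj2 (Nat.eqb_neq i n) H); reflexivity. Qed.

Lemma in_l1_unitv n : in_l1 (unitv n).
Proof. apply in_l1_of_finite_support with (S n); intros i Hi; apply unitv_neq; lia. Qed.

Lemma l1norm_unitv n : l1norm (unitv n) = 1.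
Proof.
  unfold l1norm; apply is_series_unique.
  replace 1 with (psum (fun i => Rabs (unitv n i)) (S n)).
  - apply is_series_finite_support; intros i Hi; rewrite unitv_neq by lia; apply Rabs_R0.
  - simpl; unfold unitv at 2; rewrite Nat.eqb_refl, Rabs_R1.
    rewrite (psum_ext _ (fun _ => 0)), psum_const; [ring|].
    intros k Hk; rewrite unitv_neq by lia; apply Rabs_R0.
Qed.

Definition head_part (m : nat) (x : nat -> R) : nat -> R :=
  fun i => if Nat.ltb i m then x i else 0.

Lemma in_l1_head_part m x : in_l1 (head_part m x).
Proof.
  apply in_l1_of_finite_support with m; intros i Hi; unfold head_part.
  rewrite (proj2 (Nat.ltb_ge i m) Hi); reflexivity.
Qed.

Lemma in_l1_trunc m x : in_l1 x -> in_l1 (trunc m x).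
Proof.
  intros Hx; apply ex_series_R_le with (fun n => Rabs (x n)); auto.
  intros n; rewrite Rabs_Rabsolu; unfold trunc; destruct (Nat.leb m n); [lra|].
  rewrite Rabs_R0; apply Rabs_pos.
Qed.

Lemma head_part_plus_trunc m x i : head_part m x i + trunc m x i = x i.
Proof.
  unfold head_part, trunc; destruct (Nat.ltb_spec i m), (Nat.leb_spec m i); try lia; ring.
Qed.

Lemma l1norm_trunc m x : in_l1 x ->
  l1norm (trunc m x) = l1norm x - psum (fun n => Rabs (x n)) m.
Proof.
  intros Hx.
  assert (Hhead : Series (fun n => Rabs (head_part m x n)) = psum (fun n => Rabs (x n)) m).
  { apply is_series_unique.
    replace (psum (fun n => Rabs (x n)) m) with (psum (fun n => Rabs (head_part m x n)) m).
    - apply is_series_finite_support; intros i Hi; unfold head_part.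
      rewrite (proj2 (Nat.ltb_ge i m) Hi); apply Rabs_R0.
    - apply psum_ext; intros k Hk; unfold head_part; rewrite (proj2 (Nat.ltb_lt k m) Hk); auto. }
  assert (Hsplit : l1norm x = Series (fun n => Rabs (head_part m x n) + Rabs (trunc m x n))).
  { apply Series_ext; intro n; unfold head_part, trunc.
    destruct (Nat.ltb_spec n m), (Nat.leb_spec m n); try lia; rewrite Rabs_R0; ring. }
  rewrite Series_plus, Hhead in Hsplit by (apply in_l1_head_part || apply in_l1_trunc; auto).
  unfold l1norm in *; lra.
Qed.

Lemma l1norm_trunc_cvg0 x : in_l1 x -> is_lim_seq (fun m => l1norm (trunc m x)) 0.
Proof.
  intros Hx; apply is_lim_seq_ext with (fun m => l1norm x - psum (fun n => Rabs (x n)) m).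
  - intro m; symmetry; apply l1norm_trunc; auto.
  - replace (Finite 0) with (Finite (l1norm x - l1norm x)) by (f_equal; ring).
    apply is_lim_seq_minus'; [apply is_lim_seq_const|].
    apply is_series_psum, Series_correct, Hx.
Qed.

Lemma linear_on_zero T : linear_on in_l1 T -> T (fun _ => 0) = (fun _ => 0).
Proof.
  intros [_ Hscal].
  assert (H0 : in_l1 (fun _ => 0)) by (apply in_l1_of_finite_support with 0%nat; auto).
  specialize (Hscal 0 _ H0); cbv beta in Hscal.
  replace (fun _ : nat => 0 * 0) with (fun _ : nat => 0) in Hscal
    by (apply functional_extensionality; intro; ring).
  rewrite Hscal; apply functional_extensionality; intro; ring.
Qed.

Lemma linear_head_part T x m i : linear_on in_l1 T ->
  T (head_part m x) i = psum (fun n => x n * T (unitv n) i) m.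
Proof.
  intros HT; revert i; induction m as [|m IH]; intro i.
  - replace (head_part 0 x) with (fun _ : nat => 0) by reflexivity.
    rewrite linear_on_zero; auto.
  - assert (E : head_part (S m) x = fun j => head_part m x j + x m * unitv m j).
    { apply functional_extensionality; intro j; unfold head_part, unitv.
      destruct (Nat.ltb_spec j (S m)), (Nat.ltb_spec j m), (Nat.eqb_spec j m); try lia; subst; ring. }
    assert (Hm : in_l1 (fun j => x m * unitv m j)).
    { apply in_l1_of_finite_support with (S m); intros j Hj; rewrite unitv_neq by lia; ring. }
    destruct HT as [Hadd Hscal].
    rewrite E, (Hadd _ _ (in_l1_head_part m x) Hm), (Hscal _ _ (in_l1_unitv m)); simpl.
    rewrite IH; reflexivity.
Qed.

Lemma linear_coord_series T i C : linear_on in_l1 T ->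
  (forall x, in_l1 x -> Rabs (T x i) <= C * l1norm x) ->
  forall x, in_l1 x -> is_series (fun n => x n * T (unitv n) i) (T x i).
Proof.
  intros HT HC x Hx; apply is_series_psum.
  assert (Herr : forall m, Rabs (T x i - psum (fun n => x n * T (unitv n) i) m)
                           <= C * l1norm (trunc m x)).
  { intro m; rewrite <- linear_head_part by auto.
    assert (E : T x = fun j => T (head_part m x) j + T (trunc m x) j).
    { rewrite <- (proj1 HT) by (apply in_l1_head_part || apply in_l1_trunc; auto).
      f_equal; apply functional_extensionality; intro j; symmetry; apply head_part_plus_trunc. }
    rewrite E; replace (T (head_part m x) i + T (trunc m x) i - T (head_part m x) i)
      with (T (trunc m x) i) by ring.
    apply HC, in_l1_trunc, Hx. }
  assert (Hlim : is_lim_seq (fun m => C * l1norm (trunc m x)) 0).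
  { pose proof (is_lim_seq_scal_l _ C 0 (l1norm_trunc_cvg0 x Hx)) as H; simpl in H.
    rewrite Rmult_0_r in H; exact H. }
  apply is_lim_seq_le_le with (fun m => T x i - C * l1norm (trunc m x))
                              (fun m => T x i + C * l1norm (trunc m x)).
  - intro m; specialize (Herr m); apply Rabs_le_between in Herr; lra.
  - replace (Finite (T x i)) with (Finite (T x i - 0)) by (f_equal; ring).
    apply is_lim_seq_minus'; [apply is_lim_seq_const|exact Hlim].
  - replace (Finite (T x i)) with (Finite (T x i + 0)) by (f_equal; ring).
    apply is_lim_seq_plus'; [apply is_lim_seq_const|exact Hlim].
Qed.

Lemma ex_series_l1_mult x f B : in_l1 x -> (forall n, Rabs (f n) <= B) ->
  ex_series (fun n => Rabs (x n) * Rabs (f n)).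
Proof.
  intros Hx Hf; apply ex_series_R_le with (fun n => Rabs (x n) * B); [|apply ex_series_scal_r, Hx].
  intro n; rewrite Rabs_pos_eq by (apply Rmult_le_pos; apply Rabs_pos).
  apply Rmult_le_compat_l; [apply Rabs_pos|apply Hf].
Qed.

Lemma Rabs_Series_l1_mult_le x f B : in_l1 x -> (forall n, Rabs (f n) <= B) ->
  Rabs (Series (fun n => x n * f n)) <= Series (fun n => Rabs (x n) * Rabs (f n)).
Proof.
  intros Hx Hf; rewrite (Series_ext (fun n => Rabs (x n) * Rabs (f n)) (fun n => Rabs (x n * f n)))
    by (intro; symmetry; apply Rabs_mult).
  apply Series_Rabs, (ex_series_R_ext (fun n => Rabs (x n) * Rabs (f n)));
    [intro; symmetry; apply Rabs_mult|apply (ex_series_l1_mult x f B Hx Hf)].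
Qed.

Lemma psum_Series_l1_le x (a : nat -> nat -> R) B M K : in_l1 x ->
  (forall n k, 0 <= a n k <= B) -> (forall n, psum (a n) K <= M) ->
  psum (fun k => Series (fun n => Rabs (x n) * a n k)) K <= M * l1norm x.
Proof.
  intros Hx Ha HM.
  rewrite Series_psum.
  2:{ intro k; apply (ex_series_R_ext (fun n => Rabs (x n) * Rabs (a n k)));
      [intro n; rewrite (Rabs_pos_eq (a n k)); [reflexivity|apply Ha]|].
      apply ex_series_l1_mult with B; auto; intro n; rewrite Rabs_pos_eq; apply Ha. }
  unfold l1norm; rewrite <- Series_scal_l; apply Series_le.
  - intro n; rewrite psum_scal; split.
    + apply Rmult_le_pos; [apply Rabs_pos|apply psum_nonneg; intros; apply Ha].
    + rewrite Rmult_comm; apply Rmult_le_compat_r; [apply Rabs_pos|apply HM].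
  - apply (ex_series_R_ext (fun n => Rabs (x n) * M)); [intro; ring|apply ex_series_scal_r, Hx].
Qed.

Section Approximation.

Variables (w : nat -> R) (T : (nat -> R) -> (nat -> R)) (C delta : R) (N : nat)
  (L : nat -> list nat).
Hypothesis w_weight : lorentz_weight w.
Hypothesis T_linear : linear_on in_l1 T.
Hypothesis T_dw : forall x, in_l1 x -> in_dw w (T x).
Hypothesis T_bound : forall x, in_l1 x -> lnorm w (T x) <= C * l1norm x.
Hypothesis delta_nonneg : 0 <= delta.
Hypothesis L_NoDup : forall n, NoDup (L n).
Hypothesis L_length : forall n, length (L n) = N.
Hypothesis L_top : forall n,
  psum (dstar (T (unitv n))) N - delta <= lsum (fun i => Rabs (T (unitv n) i)) (L n).
Hypothesis T_unitv_tail : forall n, lnorm w (trunc N (dstar (T (unitv n)))) <= delta.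

Definition S_approx (x : nat -> R) (i : nat) : R :=
  Series (fun n => x n * keep_on (L n) (T (unitv n)) i).

Let w_nonneg k : 0 <= w k.
Proof. destruct w_weight as [_ [H _]]; left; apply H. Qed.

Let w_antitone k : w (S k) <= w k.
Proof. apply w_weight. Qed.

Lemma T_coord_bound x i : in_l1 x -> Rabs (T x i) <= C * l1norm x.
Proof.
  intros Hx; eapply Rle_trans; [|apply T_bound, Hx].
  pose proof (Rabs_le_lnorm w w_nonneg (T x) i (T_dw x Hx)) as H.
  rewrite (proj1 w_weight), Rmult_1_l in H; exact H.
Qed.

Lemma T_unitv_bound n i : Rabs (T (unitv n) i) <= C.
Proof.
  pose proof (T_coord_bound (unitv n) i (in_l1_unitv n)) as H.
  rewrite l1norm_unitv, Rmult_1_r in H; exact H.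
Qed.

Lemma keep_on_bound n i : Rabs (keep_on (L n) (T (unitv n)) i) <= C.
Proof.
  unfold keep_on; destruct (memb _ _); [apply T_unitv_bound|].
  rewrite Rabs_R0; eapply Rle_trans; [apply Rabs_pos|apply (T_unitv_bound n i)].
Qed.

Lemma drop_on_bound n i : Rabs (drop_on (L n) (T (unitv n)) i) <= C.
Proof.
  unfold drop_on; destruct (memb _ _); [|apply T_unitv_bound].
  rewrite Rabs_R0; eapply Rle_trans; [apply Rabs_pos|apply (T_unitv_bound n i)].
Qed.

Lemma psum_keep_on_T_unitv_le n I :
  psum (fun i => Rabs (keep_on (L n) (T (unitv n)) i)) I <= C / w N.
Proof.
  assert (HwN : 0 < w N) by apply w_weight.
  assert (Hy := T_dw _ (in_l1_unitv n)).
  eapply Rle_trans; [apply psum_keep_on_le, bounded_seq_of_cvg0, Hy|].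
  rewrite L_length; apply Rmult_le_reg_l with (w N); auto.
  replace (w N * (C / w N)) with C by (field; lra).
  eapply Rle_trans; [apply psum_dstar_le_lnorm; auto|].
  pose proof (T_bound _ (in_l1_unitv n)) as H; rewrite l1norm_unitv, Rmult_1_r in H; exact H.
Qed.

Lemma S_approx_bdd : bdd_l1_l1 S_approx.
Proof.
  assert (Hex : forall x i, in_l1 x -> ex_series (fun n => x n * keep_on (L n) (T (unitv n)) i)).
  { intros x i Hx; apply ex_series_Rabs, (ex_series_R_ext (fun n => Rabs (x n) * Rabs (keep_on (L n) (T (unitv n)) i))).
    - intro; symmetry; apply Rabs_mult.
    - apply ex_series_l1_mult with C; auto; intro; apply keep_on_bound. }
  assert (Hpsum : forall x I, in_l1 x -> psum (fun i => Rabs (S_approx x i)) I <= C / w N * l1norm x).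
  { intros x I Hx; eapply Rle_trans; [apply psum_le; intros i _;
      apply (Rabs_Series_l1_mult_le x _ C Hx (fun n => keep_on_bound n i))|].
    apply psum_Series_l1_le with C; auto.
    - intros; split; [apply Rabs_pos|apply keep_on_bound].
    - intro n; apply psum_keep_on_T_unitv_le. }
  assert (HCw : 0 <= C / w N).
  { pose proof (psum_keep_on_T_unitv_le 0 0); simpl in H; lra. }
  split; [split|split].
  - intros x1 x2 H1 H2; apply functional_extensionality; intro i; unfold S_approx.
    rewrite <- Series_plus by auto; apply Series_ext; intro; ring.
  - intros a x Hx; apply functional_extensionality; intro i; unfold S_approx.
    rewrite <- Series_scal_l; apply Series_ext; intro; ring.
  - intros x Hx; apply ex_series_of_psum_le with (C / w N * l1norm x); auto.
    intros; apply Rabs_pos.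
  - exists (C / w N); intros x Hx; apply Series_le_of_psum_le; auto.
    apply Rmult_le_pos; auto; apply l1norm_nonneg.
Qed.

Lemma T_sub_S_approx_coord x i : in_l1 x ->
  is_series (fun n => x n * drop_on (L n) (T (unitv n)) i) (T x i - S_approx x i).
Proof.
  intros Hx.
  pose proof (linear_coord_series T i C T_linear (fun x Hx => T_coord_bound x i Hx) x Hx) as HT.
  assert (HS : ex_series (fun n => x n * keep_on (L n) (T (unitv n)) i)).
  { apply ex_series_Rabs, (ex_series_R_ext (fun n => Rabs (x n) * Rabs (keep_on (L n) (T (unitv n)) i))).
    - intro; symmetry; apply Rabs_mult.
    - apply ex_series_l1_mult with C; auto; intro; apply keep_on_bound. }
  apply (is_series_R_ext (fun n => x n * T (unitv n) i - x n * keep_on (L n) (T (unitv n)) i)).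
  - intro n; unfold keep_on, drop_on; destruct (memb _ _); ring.
  - exact (is_series_minus _ _ _ _ HT (Series_correct _ HS)).
Qed.

Lemma T_sub_S_approx_lnorm x : in_l1 x ->
  lnorm w (fun i => T x i - S_approx x i) <= 2 * delta * l1norm x.
Proof.
  intros Hx; apply lnorm_le_of_lists; auto.
  { apply Rmult_le_pos; [lra|apply l1norm_nonneg]. }
  intros l Hl.
  set (u := fun n i => drop_on (L n) (T (unitv n)) i).
  apply Rle_trans with (psum (fun k => Series (fun n => Rabs (x n) * (w k * Rabs (u n (nth k l 0%nat)))))
                             (length l)).
  { apply psum_le; intros k _.
    rewrite (Series_ext _ (fun n => w k * (Rabs (x n) * Rabs (u n (nth k l 0%nat)))))
      by (intro; ring).
    rewrite Series_scal_l; apply Rmult_le_compat_l; auto.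
    rewrite <- (is_series_unique _ _ (T_sub_S_approx_coord x (nth k l 0%nat) Hx)).
    apply Rabs_Series_l1_mult_le with C; auto; intro; apply drop_on_bound. }
  apply psum_Series_l1_le with (w 0%nat * C); auto.
  - intros n k; split; [apply Rmult_le_pos; auto; apply Rabs_pos|].
    apply Rmult_le_compat; auto; [apply Rabs_pos|apply weight_antitone; auto; lia|apply drop_on_bound].
  - intro n; eapply Rle_trans.
    + apply psum_weighted_drop_on_le with (N := N) (d := delta); auto.
      apply T_dw, in_l1_unitv.
    + rewrite (proj1 w_weight); specialize (T_unitv_tail n); lra.
Qed.

End Approximation.

Theorem theorem6p5 (w : nat -> R) (T : (nat -> R) -> (nat -> R)) :
  lorentz_weight w ->
  bdd_l1_dw w T ->
  almost_lengthwise_bounded w (fun y => exists n : nat, y = T (unitv n)) ->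
  forall eps, 0 < eps ->
    exists S : (nat -> R) -> (nat -> R),
      bdd_l1_l1 S /\
      exists c, c < eps /\
        forall x, in_l1 x -> lnorm w (fun i => T x i - S x i) <= c * l1norm x.
Proof.
  intros Hw [T_linear [T_dw [C T_bound]]] Halb eps Heps.
  destruct (Halb (eps / 3) ltac:(lra)) as [N HN].
  destruct (choice (fun n L => NoDup L /\ length L = N /\
      psum (dstar (T (unitv n))) N - eps / 3 <= lsum (fun i => Rabs (T (unitv n) i)) L))
    as [L HL].
  { intro n; apply exists_top_list; lra. }
  assert (Htail : forall n, lnorm w (trunc N (dstar (T (unitv n)))) <= eps / 3)
    by (intro n; left; apply HN; exists n; reflexivity).
  exists (S_approx T L); split.
  - apply S_approx_bdd with (w := w) (C := C) (N := N); auto; apply HL.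
  - exists (2 * (eps / 3)); split; [lra|].
    intros x Hx; apply T_sub_S_approx_lnorm with (C := C) (N := N); auto; try apply HL; lra.
Qed.
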